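(* Let $N\ge2$, $\alpha\in(0,\infty)^{N+1}$ and $\tilde\alpha=\sum_{n=1}^N\alpha_n$. For every $d\in\mathbb Z_+$, $$\tilde\Lambda_{d+1}=(2d+\tilde\alpha+\tilde\Lambda_d)\cup\{0[C(N,d+1)-C(N,d)]\}$$ as multisets, where $C(N,d)=\binom{d+N-1}{d}$.
   Context: $\mathscr H_d$ is the space of homogeneous polynomials of total degree $d$ in $x_1,\dots,x_N$ (so $\dim\mathscr H_d=C(N,d)$). Let $\tilde L=\sum_{n=1}^N(x_n\partial_n^2+\alpha_n\partial_n)$, which maps $\mathscr H_d$ into $\mathscr H_{d-1}$, and $|x|_1=\sum_{n=1}^Nx_n$. $\tilde\Lambda_d$ is the spectrum, as a multiset (eigenvalues with multiplicities), of the operator $\psi\mapsto|x|_1\tilde L\psi$ on $\mathscr H_d$. For a multiset $S$ and $c\in\mathbb R$, $c+S$ denotes the multiset $\{c+s:s\in S\}$; $\{0[l]\}$ denotes $0$ repeated $l$ times; $\cup$ is multiset union. *)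

From HB Require Import structures.
From mathcomp Require Import all_boot all_order all_algebra.
From mathcomp Require Import mpoly complex.
Set Implicit Arguments. Unset Strict Implicit. Unset Printing Implicit Defensive.
Import Order.TTheory GRing.Theory Num.Theory.
Local Open Scope ring_scope.

Definition mset (T : Type) := T -> nat.
(* c + S = {c + s : s in S} : multiplicity of z is that of z - c in S *)
Definition mshift (R : zmodType) (c : R) (S : mset R) : mset R := fun z => S (z - c).
Definition munion (T : Type) (S1 S2 : mset T) : mset T := fun z => (S1 z + S2 z)%N.
(* {a[l]} : a repeated l times *)
Definition mrep (T : eqType) (a : T) (l : nat) : mset T := fun z => if z == a then l else 0%N.

Section Op.
Variables (R : rcfType) (N : nat) (alpha : 'I_N.+1 -> R).

Definition norm1 : {mpoly R[N]} := \sum_(i < N) 'X_i.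

(* L~ = sum_n (x_n d_n^2 + alpha_n d_n)  (alpha_n for n = 1..N; index shifted to 0..N-1) *)
Definition Ltilde (p : {mpoly R[N]}) : {mpoly R[N]} :=
  \sum_(i < N) ('X_i * mderiv i (mderiv i p) + alpha (widen_ord (leqnSn N) i) *: mderiv i p).

Definition opT (p : {mpoly R[N]}) : {mpoly R[N]} := norm1 * Ltilde p.

Definition hmon (d : nat) := {m : 'X_{1..N < d.+1} | mdeg m == d}.

(* Matrix of opT restricted to H_d in the monomial basis (column j = image of
   the j-th basis monomial, row i = coefficient on the i-th basis monomial). *)
Definition opmx (d : nat) : 'M[R]_(#|{: hmon d}|) :=
  \matrix_(i, j) (opT 'X_[val (val (enum_val j))]) @_ (val (val (enum_val i))).

(* Spectrum (eigenvalues with algebraic multiplicities, over C = R[i]) of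
   psi |-> |x|_1 L~ psi on H_d : the root multiplicities of its characteristic
   polynomial. *)
Definition Lambda (d : nat) : mset R[i] :=
  fun z => mup z (map_poly (real_complex R) (char_poly (opmx d))).
End Op.

Definition Cdim (N d : nat) : nat := 'C(d + N - 1, d).

From HB Require Import structures.
From mathcomp Require Import all_boot all_order all_algebra.
From mathcomp Require Import mpoly complex ring.
Set Implicit Arguments. Unset Strict Implicit. Unset Printing Implicit Defensive.
Import Order.TTheory GRing.Theory Num.Theory.
Local Open Scope ring_scope.

(* With M the multiplication by |x|_1, the operator on H_(d+1) factors as
   M L~ with L~ : H_(d+1) -> H_d and M : H_d -> H_(d+1), while the commutation
   L~ (|x|_1 psi) = |x|_1 L~ psi + 2 E psi + atilde psi (E the Euler operator,
   acting as d on H_d) gives L~ M = (operator on H_d) + 2d + atilde.  Then use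
   char(AB) = X^(p-q) char(BA) for A : p x q, B : q x p and q <= p. *)

Lemma char_poly_mulmx_swap (R : idomainType) (p q : nat)
    (A : 'M[R]_(p, q)) (B : 'M[R]_(q, p)) :
  (q <= p)%N -> char_poly (A *m B) = 'X^(p - q) * char_poly (B *m A).
Proof.
move=> le_qp; rewrite /char_poly /char_poly_mx !map_mxM.
set A' := map_mx polyC A; set B' := map_mx polyC B; set x : {poly R} := 'X.
pose M := block_mx (x%:M : 'M_p) A' B' (1%:M : 'M_q).
(* Two block eliminations of M compute its determinant in two ways. *)
have elimA : block_mx 1%:M (- A') 0 x%:M *m M
    = block_mx (x%:M - A' *m B') 0 (x *: B') x%:M.
  rewrite mulmx_block !mul1mx !mul0mx !add0r mulNmx mulmx1 mul_scalar_mx mulmx1.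
  by congr block_mx; apply/matrixP=> i j; rewrite !mxE subrr.
have elimB : block_mx 1%:M 0 (- B') x%:M *m M
    = block_mx x%:M A' 0 (x%:M - B' *m A').
  rewrite mulmx_block !mul1mx !mul0mx !addr0 mulNmx mulmx1.
  rewrite mul_mx_scalar mul_scalar_mx addNr.
  by rewrite [X in block_mx _ _ _ X]addrC mulNmx.
have /(congr1 determinant) := elimA; have /(congr1 determinant) := elimB.
rewrite !det_mulmx det_ublock det_lblock det_lblock det_ublock !det_scalar.
rewrite !expr1n !mul1r => detB detA.
have xq_neq0 : x ^+ q != 0 by rewrite expf_neq0 // polyX_eq0.
by apply: (mulfI xq_neq0); rewrite mulrA -exprD subnKC // -detB mulrC -detA.
Qed.

Lemma char_poly_add_scalar (R : comNzRingType) n (A : 'M[R]_n) c :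
  char_poly (A + c%:M) = char_poly A \Po ('X - c%:P).
Proof.
rewrite /char_poly -det_map_mx; congr (\det _).
apply/matrixP => i j; rewrite /char_poly_mx !mxE.
rewrite rmorphB /= rmorphMn /= comp_polyX comp_polyC.
by case: (i == j); rewrite ?mulr1n ?mulr0n ?subr0 // polyCD; ring.
Qed.

Lemma mup_comp_XsubC (F : fieldType) (q : {poly F}) (z c : F) : q != 0 ->
  mup z (q \Po ('X - c%:P)) = mup (z - c) q.
Proof.
move=> q_neq0; have [k [r]] := multiplicity_XsubC q (z - c).
rewrite q_neq0 /= => r_z ->.
have shift : ('X - (z - c)%:P) \Po ('X - c%:P) = 'X - z%:P.
  by rewrite comp_polyB comp_polyX comp_polyC polyCB; ring.
rewrite comp_polyM rmorphXn /= shift !mupMr ?mup_XsubCX ?eqxx //.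
by rewrite /root horner_comp !hornerE.
Qed.

Section HomogBasis.
Variable n : nat.

Definition hdim d := #|{: hmon n d}|.

Definition hmono d (i : 'I_(hdim d)) : 'X_{1..n} := val (val (enum_val i)).

Lemma mdeg_hmono d (i : 'I_(hdim d)) : mdeg (hmono i) = d.
Proof. exact/eqP/(valP (enum_val i)). Qed.

Lemma hmono_inj d : injective (@hmono d).
Proof. by move=> i j /val_inj/val_inj/enum_val_inj. Qed.

Lemma hmon_onto d m : mdeg m = d -> exists h : hmon n d, val (val h) = m.
Proof.
move=> deg_m; have m_bounded : (mdeg m < d.+1)%N by rewrite deg_m.
have m_hom : mdeg (BMultinom m_bounded) == d by rewrite /= deg_m.
by exists (exist (fun b : 'X_{1..n < d.+1} => mdeg b == d) _ m_hom).
Qed.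

Lemma hmonoP d m : mdeg m = d -> exists i : 'I_(hdim d), hmono i = m.
Proof.
by case/hmon_onto => h <-; exists (enum_rank h); rewrite /hmono enum_rankK.
Qed.

Variable R : comNzRingType.
Local Notation P := {mpoly R[n]}.

Lemma dhomog_hmonoE d (p : P) : p \is d.-homog ->
  p = \sum_(k < hdim d) p@_(hmono k) *: 'X_[hmono k].
Proof.
move=> p_hom; apply/mpolyP => m; rewrite raddf_sum /=.
under eq_bigr do rewrite mcoeffZ mcoeffX.
have [deg_m|deg_m] := eqVneq (mdeg m) d; last first.
  rewrite (dhomog_nemf_coeff p_hom deg_m) big1 // => j _.
  case: eqP => [hj_m|_]; last by rewrite mulr0.
  by rewrite -hj_m mdeg_hmono eqxx in deg_m.
have [i <-] := hmonoP deg_m; rewrite (bigD1 i) //= eqxx mulr1 big1 ?addr0 //.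
by move=> j /negbTE j_i; rewrite (inj_eq (@hmono_inj d)) j_i mulr0.
Qed.

Definition homog_mx (f : P -> P) d e : 'M[R]_(hdim e, hdim d) :=
  \matrix_(i, j) (f 'X_[hmono j])@_(hmono i).

Lemma homog_mx_comp (f : P -> P) (g : {linear P -> P}) d e e' :
    (forall j : 'I_(hdim d), f 'X_[hmono j] \is e.-homog) ->
  homog_mx (g \o f) d e' = homog_mx g e e' *m homog_mx f d e.
Proof.
move=> f_hom; apply/matrixP => i j; rewrite !mxE /= (dhomog_hmonoE (f_hom j)).
rewrite linear_sum raddf_sum /=; apply: eq_bigr => k _.
by rewrite linearZ mcoeffZ !mxE mulrC.
Qed.
End HomogBasis.

Section MpolyDerivHomog.
Variables (R : comNzRingType) (n : nat).
Implicit Types (p : {mpoly R[n]}) (m : 'X_{1..n}).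

Lemma mcoeff_mderiv_dhomog e p i m : p \is e.-homog ->
  (mdeg m).+1 != e -> (mderiv i p)@_m = 0.
Proof.
move=> p_hom deg_m; rewrite mcoeff_mderiv (dhomog_nemf_coeff p_hom) ?mul0rn //.
by rewrite /= mdegD mdeg1 addn1.
Qed.

Lemma mderiv_dhomog e p i : p \is e.+1.-homog -> mderiv i p \is e.-homog.
Proof.
move=> p_hom; apply/dhomogP => m; rewrite mcoeff_msupp; apply: contraNeq.
by move=> deg_m; rewrite (mcoeff_mderiv_dhomog _ p_hom) // eqSS.
Qed.

Lemma mderiv_dhomog0 p i : p \is 0.-homog -> mderiv i p = 0.
Proof.
move=> p_hom; apply/mpolyP => m.
by rewrite mcoeff0 (mcoeff_mderiv_dhomog _ p_hom).
Qed.

Lemma mulX_mderiv_dhomog e p i :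
  p \is e.-homog -> 'X_i * mderiv i p \is e.-homog.
Proof.
case: e => [|e] p_hom; first by rewrite mderiv_dhomog0 // mulr0 dhomog0.
rewrite -add1n; apply: dhomogM; last exact: mderiv_dhomog.
by rewrite dhomogX /= mdeg1.
Qed.

Lemma mpolyX_euler m :
  \sum_i 'X_i * mderiv i 'X_[m] = (mdeg m)%:R *: ('X_[m] : {mpoly R[n]}).
Proof.
rewrite mdegE natr_sum scaler_suml; apply: eq_bigr => i _.
rewrite mderivX -scalerAr.
have [->|m_i] := eqVneq (m i) 0%N; first by rewrite !scale0r.
rewrite -mpolyXD addmC submK //; apply/mnm_lepP => j; rewrite mnm1E.
by case: eqP => [<-|]; rewrite ?lt0n.
Qed.
End MpolyDerivHomog.

Section Operator.
Variables (R : rcfType) (N : nat) (alpha : 'I_N.+1 -> R).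
Local Notation P := {mpoly R[N]}.
Local Notation Lt := (Ltilde alpha).
Local Notation atilde := (\sum_(n < N) alpha (widen_ord (leqnSn N) n)).

Lemma Ltilde_is_linear : linear Lt.
Proof.
move=> c p q; rewrite /Ltilde scaler_sumr -big_split /=; apply: eq_bigr => i _.
by rewrite !linearP /= mulrDr scalerDr -scalerAr addrACA.
Qed.

HB.instance Definition _ := GRing.isLinear.Build R P P _ Lt Ltilde_is_linear.

Definition mul_norm1 (p : P) := norm1 R N * p.

Lemma mul_norm1_is_linear : linear mul_norm1.
Proof. by move=> c p q; rewrite /mul_norm1 mulrDr scalerAr. Qed.

HB.instance Definition _ :=
  GRing.isLinear.Build R P P _ mul_norm1 mul_norm1_is_linear.

Lemma norm1_dhomog : norm1 R N \is 1.-homog.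
Proof. by apply: rpred_sum => i _; rewrite dhomogX /= mdeg1. Qed.

Lemma Ltilde_dhomog d (p : P) : p \is d.+1.-homog -> Lt p \is d.-homog.
Proof.
move=> p_hom; apply: rpred_sum => i _; have dp_hom := mderiv_dhomog i p_hom.
by apply: rpredD; [exact: mulX_mderiv_dhomog | exact: rpredZ].
Qed.

Lemma mderiv_norm1 i : mderiv i (norm1 R N) = 1.
Proof.
rewrite /norm1 raddf_sum (bigD1 i) //= big1 ?addr0 => [|j j_i]; last first.
  by rewrite mderivX mnm1E (negbTE j_i) scale0r.
by rewrite mderivX mnm1E eqxx scale1r -{1}[U_(i)%MM]add0m addmK mpolyX0.
Qed.

Lemma Ltilde_mul_norm1 (p : P) : Lt (norm1 R N * p) =
  norm1 R N * Lt p + 2%:R * (\sum_i 'X_i * mderiv i p) + atilde%:MP * p.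
Proof.
rewrite /Ltilde raddf_sum [X in _ = _ + X]mulr_suml mulr_sumr mulr_sumr.
rewrite -!big_split /=; apply: eq_bigr => i _.
rewrite !(mderivM, mderivD) mderiv_norm1 -mpolyC1 mderivC mpolyC1.
by rewrite -!mul_mpolyC; ring.
Qed.

Lemma Ltilde_mul_norm1_X m : Lt (norm1 R N * 'X_[m]) =
  norm1 R N * Lt 'X_[m] + (2 * (mdeg m)%:R + atilde) *: 'X_[m].
Proof.
rewrite Ltilde_mul_norm1 mpolyX_euler -addrA; congr (_ + _).
by rewrite -mpolyC_nat !mul_mpolyC scalerA scalerDl.
Qed.

Lemma opmx_factor d :
  opmx alpha d.+1 = homog_mx mul_norm1 d d.+1 *m homog_mx Lt d.+1 d.
Proof.
rewrite -homog_mx_comp // => j.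
by apply: Ltilde_dhomog; rewrite dhomogX /= mdeg_hmono.
Qed.

Lemma opmx_factor_swap d : homog_mx Lt d.+1 d *m homog_mx mul_norm1 d d.+1 =
  opmx alpha d + (2 * d%:R + atilde)%:M.
Proof.
rewrite -homog_mx_comp => [|j]; last first.
  by rewrite /mul_norm1 -add1n dhomogM ?norm1_dhomog // dhomogX /= mdeg_hmono.
apply/matrixP => i j; rewrite !mxE /= Ltilde_mul_norm1_X mdeg_hmono.
rewrite mcoeffD mcoeffZ mcoeffX (inj_eq (@hmono_inj _ _)) eq_sym.
by case: (i == j); rewrite ?mulr1 ?mulr0 ?addr0.
Qed.
End Operator.

Lemma card_hmon N d : (0 < N)%N -> #|{: hmon N d}| = Cdim N d.
Proof.
case: N => // n _; rewrite /Cdim addnS subn1 /= -size_basis cardE.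
rewrite -(size_map (fun h : hmon n.+1 d => val (val h))).
apply: perm_size; apply: uniq_perm; last 1 first.
- move=> m; rewrite -basis_cover; apply/mapP/eqP => [[h _ ->]|deg_m].
    exact/eqP/(valP h).
  by have [h <-] := hmon_onto deg_m; exists h; rewrite ?mem_enum.
- by rewrite map_inj_uniq ?enum_uniq // => h h' /val_inj/val_inj.
- exact: uniq_basis.
Qed.

Lemma Cdim_leqS N d : (0 < N)%N -> (Cdim N d <= Cdim N d.+1)%N.
Proof.
by case: N => // n _; rewrite /Cdim !addnS !subn1 /= addSn binS leq_addl.
Qed.

Lemma char_poly_opmx_succ (R : rcfType) N (alpha : 'I_N.+1 -> R) d :
    (0 < N)%N ->
  let atilde := \sum_(n < N) alpha (widen_ord (leqnSn N) n) in
  char_poly (opmx alpha d.+1) = 'X^(Cdim N d.+1 - Cdim N d) *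
    (char_poly (opmx alpha d) \Po ('X - (2 * d%:R + atilde)%:P)).
Proof.
move=> N_gt0 atilde; rewrite opmx_factor char_poly_mulmx_swap; last first.
  by rewrite /hdim !card_hmon ?Cdim_leqS.
rewrite opmx_factor_swap char_poly_add_scalar /hdim card_hmon //.
by congr (_ ^+ (_ - _) * _); apply: card_hmon.
Qed.

Theorem proposition4p1 (R : rcfType) (N : nat) (alpha : 'I_N.+1 -> R) :
  (2 <= N)%N ->
  (forall n, 0 < alpha n) ->
  forall d : nat,
    let atilde := \sum_(n < N) alpha (widen_ord (leqnSn N) n) in
    Lambda alpha d.+1 =1
      munion (mshift ((2 * d%:R + atilde)%:C)%C (Lambda alpha d))
             (mrep 0 (Cdim N d.+1 - Cdim N d)%N).
Proof.
move=> N_ge2 _ d atilde z; rewrite /Lambda /munion /mshift /mrep.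
rewrite char_poly_opmx_succ ?(ltnW N_ge2) //.
have char_neq0 : char_poly (opmx alpha d) != 0.
  exact/monic_neq0/char_poly_monic.
rewrite rmorphM rmorphXn /= map_polyX map_comp_poly rmorphB /=.
rewrite map_polyX map_polyC /=.
rewrite mupM ?expf_neq0 ?polyX_eq0 ?comp_poly2_eq0 ?size_XsubC ?map_poly_eq0 //.
rewrite mup_comp_XsubC ?map_poly_eq0 // -[X in mup z (X ^+ _)]subr0.
by rewrite mup_XsubCX addnC eq_sym.
Qed.
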